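(* Let $A,B$ be an LR pair on $V$ with parameter sequence $(\varphi_i)_{i=1}^d$ and let $E_i$ ($0\le i\le d$) be the projection onto the $i$-th component of the $(A,B)$-decomposition. Define $$\Psi=\sum_{i=0}^d\frac{\varphi_1\varphi_2\cdots\varphi_i}{\varphi_d\varphi_{d-1}\cdots\varphi_{d-i+1}}E_i .$$ Then $\Psi$ is invertible, each of $A,\Psi^{-1}B\Psi$ and $\Psi A\Psi^{-1},B$ is an LR pair on $V$, and the three LR pairs $$A,\ \Psi^{-1}B\Psi\qquad\qquad B,\ A\qquad\qquad \Psi A\Psi^{-1},\ B$$ are mutually isomorphic.
   Context: Let $V$ be a vector space over a field $\mathbb F$ with $\dim V=d+1$. A decomposition of $V$ is a sequence $(V_i)_{i=0}^d$ of one-dimensional subspaces with $V=\bigoplus_{i=0}^d V_i$. An element $X\in\mathrm{End}(V)$ lowers the decomposition if $XV_i=V_{i-1}$ for $1\le i\le d$ and $XV_0=0$; it raises it if $XV_i=V_{i+1}$ for $0\le i\le d-1$ and $XV_d=0$. An ordered pair $A,B\in\mathrm{End}(V)$ is an LR pair on $V$ if some decomposition of $V$ is lowered by $A$ and raised by $B$; it is unique, the $(A,B)$-decomposition $(V_i)$. The projection $E_i$ maps $V_i$ identically and kills $V_j$ for $j\ne i$. For $1\le i\le d$, $V_i$ is invariant under $BA$ with nonzero eigenvalue $\varphi_i$ (the parameter sequence). LR pairs $A,B$ and $A',B'$ on $V$ are isomorphic if there is an invertible $\sigma\in\mathrm{End}(V)$ with $\sigma A=A'\sigma$, $\sigma B=B'\sigma$.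 *)

From HB Require Import structures.
From mathcomp Require Import all_boot all_order all_algebra.
Set Implicit Arguments. Unset Strict Implicit. Unset Printing Implicit Defensive.
Import GRing.Theory.
Local Open Scope ring_scope.

Section LR.
Variables (F : fieldType) (V : vectType F) (d : nat).

Definition decomposition (Vs : nat -> {vspace V}) : Prop :=
  [/\ forall i, (i <= d)%N -> \dim (Vs i) = 1%N,
      directv (\sum_(i < d.+1) Vs i)%VS
    & (\sum_(i < d.+1) Vs i)%VS = fullv].

Definition lowers (X : 'End(V)) (Vs : nat -> {vspace V}) : Prop :=
  (forall i, (1 <= i <= d)%N -> (X @: Vs i)%VS = Vs i.-1) /\ (X @: Vs 0%N)%VS = 0%VS.

Definition raises (X : 'End(V)) (Vs : nat -> {vspace V}) : Prop :=
  (forall i, (i < d)%N -> (X @: Vs i)%VS = Vs i.+1) /\ (X @: Vs d)%VS = 0%VS.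

Definition LR_pair (A B : 'End(V)) : Prop :=
  exists Vs, [/\ decomposition Vs, lowers A Vs & raises B Vs].

Definition is_projection (Vs : nat -> {vspace V}) (i : nat) (Ei : 'End(V)) : Prop :=
  (forall v, v \in Vs i -> Ei v = v) /\
  (forall j, (j <= d)%N -> j != i -> forall v, v \in Vs j -> Ei v = 0).

Definition invertible (f : 'End(V)) : Prop :=
  exists g : 'End(V), (g \o f = \1)%VF /\ (f \o g = \1)%VF.

Definition LR_iso (A B A' B' : 'End(V)) : Prop :=
  exists sigma : 'End(V), [/\ invertible sigma,
    (sigma \o A = A' \o sigma)%VF & (sigma \o B = B' \o sigma)%VF].

End LR.

From HB Require Import structures.
From mathcomp Require Import all_boot all_order all_algebra.
From mathcomp Require Import ring zify.
Import GRing.Theory.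
Local Open Scope ring_scope.

(* The map [sigma] sending [v] in [V_j] to [B^(d-j) (A^j v)] carries [V_j] onto
   [V_(d-j)]; it intertwines [A] with [B] directly, and intertwines
   [Psi^-1 B Psi] with [A] because on [V_j] the two sides differ by the factor
   [psi_j phi_(j+1) / psi_(j+1) phi_(d-j)], which the choice of the
   coefficients [psi_j] of [Psi] makes equal to [1].  [sigma] is invertible
   because [sigma^2] acts on each [V_j] by a product of [phi_i]'s, and these are
   nonzero since [B A] maps [V_i] onto [V_i].  The third pair is the conjugate
   of the first by [Psi], and isomorphism of LR pairs is an equivalence
   relation. *)

Set Implicit Arguments.
Unset Strict Implicit.

Section Endomorphisms.
Variables (F : fieldType) (V : vectType F).
Implicit Types (f g A B : 'End(V)) (U : {vspace V}).

Lemma invertible_lker0 f : lker f == 0%VS -> invertible f.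
Proof. by move=> f0; exists (f^-1)%VF; split; [exact: lker0_compVf | exact: lker0_compfV]. Qed.

Lemma LR_iso_sym A B A1 B1 : LR_iso A B A1 B1 -> LR_iso A1 B1 A B.
Proof.
case=> s [[g [gs sg]] sA sB]; exists g.
have intertwine X X1 : (s \o X = X1 \o s)%VF -> (g \o X1 = X \o g)%VF.
  move=> sX; have -> : X1 = (s \o X \o g)%VF by rewrite sX -comp_lfunA sg comp_lfun1r.
  by rewrite !comp_lfunA gs comp_lfun1l.
by split; [exists s | exact: intertwine | exact: intertwine].
Qed.

Lemma LR_iso_trans A B A1 B1 A2 B2 :
  LR_iso A B A1 B1 -> LR_iso A1 B1 A2 B2 -> LR_iso A B A2 B2.
Proof.
case=> s [[g [gs sg]] sA sB] [t [[h [ht th]] tA tB]].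
exists (t \o s)%VF; split.
- exists (g \o h)%VF; split.
    by rewrite comp_lfunA -[(g \o h \o t)%VF]comp_lfunA ht comp_lfun1r.
  by rewrite comp_lfunA -[(t \o s \o g)%VF]comp_lfunA sg comp_lfun1r.
- by rewrite -comp_lfunA sA comp_lfunA tA comp_lfunA.
- by rewrite -comp_lfunA sB comp_lfunA tB comp_lfunA.
Qed.

Lemma LR_iso_conj f A B :
  lker f == 0%VS -> LR_iso A (f^-1 \o B \o f)%VF (f \o A \o f^-1)%VF B.
Proof.
move=> f0; exists f; split; first exact: invertible_lker0.
- by rewrite lker0_compfVK.
- by rewrite comp_lfunA lker0_compVKf.
Qed.

Lemma limg_scalar f U c : c != 0 -> {in U, forall v, f v = c *: v} -> (f @: U)%VS = U.
Proof.
move=> c0 fU; apply/vspaceP => w; apply/memv_imgP/idP => [[u Uu ->] | Uw].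
  by rewrite fU // memvZ.
exists (c^-1 *: w); first by rewrite memvZ.
by rewrite fU ?memvZ // scalerA mulfV // scale1r.
Qed.

Lemma lfunV_scalar f U c : lker f == 0%VS -> c != 0 ->
  {in U, forall v, f v = c *: v} -> {in U, forall v, (f^-1)%VF v = c^-1 *: v}.
Proof.
move=> f0 c0 fU v Uv; apply: (lker0P f0).
by rewrite lker0_lfunVK // fU ?memvZ // scalerA mulfV // scale1r.
Qed.

Fixpoint lfun_exp f k : 'End(V) := if k is k.+1 then (f \o lfun_exp f k)%VF else \1%VF.

Lemma lfun_exp0E f v : lfun_exp f 0 v = v.
Proof. by rewrite id_lfunE. Qed.

Lemma lfun_expSE f k v : lfun_exp f k.+1 v = f (lfun_exp f k v).
Proof. by rewrite comp_lfunE. Qed.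

Lemma lfun_expSrE f k v : lfun_exp f k.+1 v = lfun_exp f k (f v).
Proof.
elim: k v => [|k IHk] v; first by rewrite lfun_expSE !lfun_exp0E.
by rewrite lfun_expSE IHk -lfun_expSE.
Qed.

End Endomorphisms.

Section Components.
Variables (F : fieldType) (V : vectType F) (d : nat) (Vs : nat -> {vspace V}).
Implicit Types (f g h X : 'End(V)).

Lemma lowers_comp g X h :
  (forall i, (i <= d)%N -> (g @: Vs i)%VS = Vs i) ->
  (forall i, (i <= d)%N -> (h @: Vs i)%VS = Vs i) ->
  lowers d X Vs -> lowers d (g \o X \o h)%VF Vs.
Proof.
move=> gVs hVs [Xlow X0]; split; last by rewrite !limg_comp hVs // X0 limg0.
by move=> i /andP[i1 id]; rewrite !limg_comp hVs // Xlow ?i1 // gVs //; lia.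
Qed.

Lemma raises_comp g X h :
  (forall i, (i <= d)%N -> (g @: Vs i)%VS = Vs i) ->
  (forall i, (i <= d)%N -> (h @: Vs i)%VS = Vs i) ->
  raises d X Vs -> raises d (g \o X \o h)%VF Vs.
Proof.
move=> gVs hVs [Xrai Xd]; split; last by rewrite !limg_comp hVs // Xd limg0.
by move=> i id; rewrite !limg_comp hVs 1?ltnW // Xrai // gVs.
Qed.

Lemma sum_projections_component (E : nat -> 'End(V)) (p : nat -> V -> V) j v :
  (forall i, (i <= d)%N -> is_projection d Vs i (E i)) -> (forall i, p i 0 = 0) ->
  (j <= d)%N -> v \in Vs j -> \sum_(i < d.+1) p i (E i v) = p j v.
Proof.
move=> hE p0 jd Vj_v; rewrite (bigD1 (Ordinal (jd : j < d.+1)%N)) //= big1 ?addr0.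
  by rewrite (proj1 (hE j jd)).
move=> i ij; rewrite (proj2 (hE i (ltn_ord i)) j) //.
by apply: contra_neq ij => ji; apply: val_inj; rewrite /= ji.
Qed.

Hypothesis hdec : decomposition d Vs.

Lemma decomposition_sumP v :
  exists2 vs : 'I_d.+1 -> V, (forall i, vs i \in Vs i) & v = \sum_(i < d.+1) vs i.
Proof.
case: hdec => _ _ Vs_full.
have /memv_sumP[vs Vs_vs ->] : v \in (\sum_(i < d.+1) Vs i)%VS by rewrite Vs_full memvf.
by exists vs => // i; apply: Vs_vs.
Qed.

Lemma lfun_eq_on_components f g :
  (forall j, (j <= d)%N -> {in Vs j, f =1 g}) -> f = g.
Proof.
move=> fg; apply/lfunP => v; have [vs Vs_vs ->] := decomposition_sumP v.
by rewrite !linear_sum; apply: eq_bigr => i _; apply: fg (ltn_ord i) _ (Vs_vs i).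
Qed.

Lemma lker0_scalar_on_components f :
  (forall j, (j <= d)%N -> exists2 c : F, c != 0 & {in Vs j, forall v, f v = c *: v}) ->
  lker f == 0%VS.
Proof.
move=> f_scal; rewrite -subv0; apply/subvP => v; rewrite memv_ker memv0 => /eqP fv0.
have [vs Vs_vs v_sum] := decomposition_sumP v.
have f_vs0 i : f (vs i) = 0.
  case: hdec => _ /directv_sum_independent indep _.
  apply: (indep (fun j => f (vs j))) => // [j _|].
    by have [c _ fc] := f_scal j (ltn_ord j); rewrite fc ?memvZ.
  by rewrite -linear_sum -v_sum.
rewrite v_sum big1 // => i _; have [c c0 fc] := f_scal i (ltn_ord i).
by have /eqP := f_vs0 i; rewrite fc // scaler_eq0 (negbTE c0) => /eqP.
Qed.

End Components.

Section LRPair.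
Variables (F : fieldType) (V : vectType F) (d : nat).
Variables (A B : 'End(V)) (Vs : nat -> {vspace V}).
Hypotheses (hdec : decomposition d Vs) (hlow : lowers d A Vs) (hrai : raises d B Vs).
Variable phi : nat -> F.
Hypothesis hphi : forall i, (1 <= i <= d)%N -> {in Vs i, forall v, B (A v) = phi i *: v}.

Lemma memv_lower i v : (1 <= i <= d)%N -> v \in Vs i -> A v \in Vs i.-1.
Proof. by move=> id Vi_v; rewrite -(hlow.1 i id) memv_img. Qed.

Lemma memv_raise i v : (i < d)%N -> v \in Vs i -> B v \in Vs i.+1.
Proof. by move=> id Vi_v; rewrite -(hrai.1 i id) memv_img. Qed.

Lemma lower_bottom v : v \in Vs 0 -> A v = 0.
Proof. by move=> V0_v; apply/eqP; rewrite -memv0 -hlow.2 memv_img. Qed.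

Lemma raise_top v : v \in Vs d -> B v = 0.
Proof. by move=> Vd_v; apply/eqP; rewrite -memv0 -hrai.2 memv_img. Qed.

Lemma memv_lower_exp k i v : (k <= i <= d)%N -> v \in Vs i -> lfun_exp A k v \in Vs (i - k).
Proof.
elim: k => [|k IHk] ki Vi_v; first by rewrite lfun_exp0E subn0.
have -> : (i - k.+1 = (i - k).-1)%N by lia.
by rewrite lfun_expSE memv_lower ?IHk //; lia.
Qed.

Lemma memv_lower_exp_bottom j v : (j <= d)%N -> v \in Vs j -> lfun_exp A j v \in Vs 0.
Proof. by move=> jd Vj_v; rewrite -(subnn j) memv_lower_exp ?leqnn. Qed.

Lemma memv_raise_exp k i v : (i + k <= d)%N -> v \in Vs i -> lfun_exp B k v \in Vs (i + k).
Proof.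
elim: k => [|k IHk] ikd Vi_v; first by rewrite lfun_exp0E addn0.
by rewrite lfun_expSE addnS memv_raise ?IHk //; lia.
Qed.

Lemma phi_neq0 i : (1 <= i <= d)%N -> phi i != 0.
Proof.
move=> /andP[i1 id]; apply/eqP => phi0.
have BA_Vi : ((B \o A) @: Vs i)%VS = Vs i.
  rewrite limg_comp hlow.1 ?i1 // hrai.1; [by rewrite prednK | lia].
have BA_0 : ((B \o A) @: Vs i)%VS = 0%VS.
  apply/eqP; rewrite -subv0; apply/subvP => _ /memv_imgP[v Vi_v ->].
  by rewrite comp_lfunE (@hphi i) ?i1 // phi0 scale0r mem0v.
by case: hdec => dim1 _ _; have := dim1 i id; rewrite -BA_Vi BA_0 dimv0.
Qed.

Lemma lower_raise j v : (j < d)%N -> v \in Vs j -> A (B v) = phi j.+1 *: v.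
Proof.
move=> jd; rewrite -[j]/(j.+1.-1) -(hlow.1 j.+1) ?jd // => /memv_imgP[u Vj1_u ->].
by rewrite (@hphi j.+1) ?jd // linearZ.
Qed.

Lemma raise_lower_exp k j : (k <= j <= d)%N ->
  exists2 c : F, c != 0 & {in Vs j, forall v, lfun_exp B k (lfun_exp A k v) = c *: v}.
Proof.
elim: k j => [|k IHk] j kjd.
  by exists 1; rewrite ?oner_eq0 // => v _; rewrite !lfun_exp0E scale1r.
have [c c0 BAk] := IHk j.-1 ltac:(lia).
exists (c * phi j); first by rewrite mulf_neq0 // phi_neq0 //; lia.
move=> v Vj_v; rewrite lfun_expSE lfun_expSrE BAk ?memv_lower //; last by lia.
by rewrite linearZ /= (@hphi j) ?scalerA //; lia.
Qed.

Lemma lower_raise_exp k j : (j + k <= d)%N ->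
  exists2 c : F, c != 0 & {in Vs j, forall v, lfun_exp A k (lfun_exp B k v) = c *: v}.
Proof.
elim: k j => [|k IHk] j jkd.
  by exists 1; rewrite ?oner_eq0 // => v _; rewrite !lfun_exp0E scale1r.
have [c c0 ABk] := IHk j.+1 ltac:(lia).
exists (c * phi j.+1); first by rewrite mulf_neq0 // phi_neq0 //; lia.
move=> v Vj_v; rewrite lfun_expSE lfun_expSrE ABk ?memv_raise //; last by lia.
by rewrite linearZ /= (@lower_raise j) ?scalerA //; lia.
Qed.

Variable E : nat -> 'End(V).
Hypothesis hE : forall i, (i <= d)%N -> is_projection d Vs i (E i).

Definition psi i := (\prod_(1 <= k < i.+1) phi k) / (\prod_(1 <= k < i.+1) phi (d.+1 - k)%N).

Lemma prod_phi_neq0 (f : nat -> nat) m :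
  (forall k, (1 <= k < m)%N -> (1 <= f k <= d)%N) -> \prod_(1 <= k < m) phi (f k) != 0.
Proof.
move=> f_range; rewrite prodf_seq_neq0; apply/allP => k; rewrite mem_index_iota => km.
exact/implyP/(fun _ => phi_neq0 (f_range k km)).
Qed.

Lemma psi_neq0 i : (i <= d)%N -> psi i != 0.
Proof.
by move=> id; rewrite mulf_neq0 ?invr_neq0 // prod_phi_neq0 // => k; lia.
Qed.

Lemma psiS i : (i < d)%N -> psi i.+1 * phi (d - i)%N = psi i * phi i.+1.
Proof.
move=> id; have phi_di : phi (d - i)%N != 0 by apply: phi_neq0; lia.
have Q0 : \prod_(1 <= k < i.+1) phi (d.+1 - k)%N != 0 by rewrite prod_phi_neq0 // => k; lia.
rewrite /psi !(big_nat_recr i.+1) //= subSS.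
by field; rewrite Q0 phi_di.
Qed.

Definition Psi : 'End(V) := \sum_(i < d.+1) psi i *: E i.

Lemma PsiE j : (j <= d)%N -> {in Vs j, forall v, Psi v = psi j *: v}.
Proof.
move=> jd v Vj_v; rewrite sum_lfunE; under eq_bigr do rewrite scale_lfunE.
by apply: (sum_projections_component (p := fun i x => psi i *: x) hE) => // i; rewrite scaler0.
Qed.

Lemma Psi_lker0 : lker Psi == 0%VS.
Proof.
apply: (lker0_scalar_on_components hdec) => j jd.
by exists (psi j); [exact: psi_neq0 | exact: PsiE].
Qed.

Lemma PsiVE j : (j <= d)%N -> {in Vs j, forall v, (Psi^-1)%VF v = (psi j)^-1 *: v}.
Proof. by move=> jd; apply: lfunV_scalar Psi_lker0 (psi_neq0 jd) (PsiE jd). Qed.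

Lemma limg_Psi j : (j <= d)%N -> (Psi @: Vs j)%VS = Vs j.
Proof. by move=> jd; apply: limg_scalar (psi_neq0 jd) (PsiE jd). Qed.

Lemma limg_PsiV j : (j <= d)%N -> ((Psi^-1)%VF @: Vs j)%VS = Vs j.
Proof. by move=> jd; apply: limg_scalar (invr_neq0 (psi_neq0 jd)) (PsiVE jd). Qed.

Definition sigma : 'End(V) :=
  \sum_(i < d.+1) (lfun_exp B (d - i) \o lfun_exp A i \o E i)%VF.

Lemma sigmaE j : (j <= d)%N ->
  {in Vs j, forall v, sigma v = lfun_exp B (d - j) (lfun_exp A j v)}.
Proof.
move=> jd v Vj_v; rewrite sum_lfunE; under eq_bigr do rewrite !comp_lfunE.
apply: (sum_projections_component (p := fun i x => lfun_exp B (d - i) (lfun_exp A i x)) hE) => //.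
by move=> i; rewrite !linear0.
Qed.

Lemma sigma_comp_lower : (sigma \o A = B \o sigma)%VF.
Proof.
apply: (lfun_eq_on_components hdec) => -[|j] jd v Vj_v; rewrite !comp_lfunE.
  rewrite lower_bottom // linear0 (sigmaE jd) // subn0 raise_top //.
  by rewrite -[d in Vs d]add0n memv_raise_exp ?lfun_exp0E.
rewrite (sigmaE (ltnW jd) (memv_lower (i := j.+1) jd Vj_v)) (sigmaE jd Vj_v).
by rewrite -lfun_expSrE -lfun_expSE subnSK.
Qed.

Lemma sigma_comp_conj_raise : (sigma \o (Psi^-1 \o B \o Psi) = A \o sigma)%VF.
Proof.
apply: (lfun_eq_on_components hdec) => j jd v Vj_v.
rewrite !comp_lfunE (PsiE jd Vj_v) linearZ /=.
move: jd; rewrite leq_eqVlt => /orP[/eqP jd | jd].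
  subst j; rewrite raise_top // !linear0 (sigmaE (leqnn d) Vj_v) subnn lfun_exp0E.
  by rewrite lower_bottom // memv_lower_exp_bottom.
set w := lfun_exp B (d - j.+1) (lfun_exp A j v).
have Vw : w \in Vs (d - j.+1)%N.
  by rewrite -[(d - j.+1)%N]add0n memv_raise_exp ?memv_lower_exp_bottom ?(ltnW jd) //; lia.
have sigma_v : sigma v = B w by rewrite (sigmaE (ltnW jd) Vj_v) -(subnSK jd) lfun_expSE.
have sigma_Bv : sigma (B v) = phi j.+1 *: w.
  by rewrite (sigmaE jd (memv_raise jd Vj_v)) lfun_expSrE (lower_raise jd Vj_v) !linearZ.
have ABw : A (B w) = phi (d - j) *: w.
  by rewrite (lower_raise (j := (d - j.+1)%N)) ?subnSK //; lia.
rewrite !linearZ /= (PsiVE jd (memv_raise jd Vj_v)) linearZ /= sigma_Bv sigma_v ABw !scalerA.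
congr (_ *: _); have psij1_neq0 := psi_neq0 jd.
by apply: (mulfI psij1_neq0); rewrite psiS //; field.
Qed.

Lemma sigma_lker0 : lker sigma == 0%VS.
Proof.
suff /lker0P sigma2_inj : lker (sigma \o sigma)%VF == 0%VS.
  by apply/lker0P => x y sxy; apply: sigma2_inj; rewrite !comp_lfunE sxy.
apply: (lker0_scalar_on_components hdec) => j jd.
have [c1 c1_neq0 ABc1] := lower_raise_exp (k := (d - j)%N) (j := 0) (leq_subr _ _).
have jjd : (j <= j <= d)%N by rewrite leqnn.
have [c2 c2_neq0 BAc2] := raise_lower_exp jjd.
exists (c1 * c2); first by rewrite mulf_neq0.
move=> v Vj_v; have V0_Ajv := memv_lower_exp_bottom jd Vj_v.
have Vdj : lfun_exp B (d - j) (lfun_exp A j v) \in Vs (d - j)%N.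
  by rewrite -[(d - j)%N]add0n memv_raise_exp ?add0n ?leq_subr.
rewrite comp_lfunE (sigmaE jd Vj_v) (sigmaE (leq_subr _ _) Vdj) ABc1 //.
by rewrite linearZ /= subKn // BAc2 // scalerA mulrC.
Qed.

Lemma LR_pair_conj_raise : LR_pair d A (Psi^-1 \o B \o Psi)%VF.
Proof. by exists Vs; split => //; apply: raises_comp limg_PsiV limg_Psi hrai. Qed.

Lemma LR_pair_conj_lower : LR_pair d (Psi \o A \o Psi^-1)%VF B.
Proof. by exists Vs; split => //; apply: lowers_comp limg_Psi limg_PsiV hlow. Qed.

Lemma LR_iso_sigma : LR_iso A (Psi^-1 \o B \o Psi)%VF B A.
Proof.
by exists sigma; split;
  [exact: invertible_lker0 sigma_lker0 | exact: sigma_comp_lower | exact: sigma_comp_conj_raise].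
Qed.

End LRPair.

Unset Implicit Arguments.

Theorem proposition7p19 (F : fieldType) (V : vectType F) (d : nat)
  (hdim : \dim (fullv : {vspace V}) = d.+1)
  (A B : 'End(V)) (Vs : nat -> {vspace V})
  (hdec : decomposition d Vs) (hlow : lowers d A Vs) (hrai : raises d B Vs)
  (phi : nat -> F)
  (hphi : forall i, (1 <= i <= d)%N -> forall v, v \in Vs i -> B (A v) = phi i *: v)
  (E : nat -> 'End(V))
  (hE : forall i, (i <= d)%N -> is_projection d Vs i (E i)) :
  let Psi : 'End(V) :=
    \sum_(i < d.+1)
       ((\prod_(1 <= k < i.+1) phi k) / (\prod_(1 <= k < i.+1) phi (d.+1 - k)%N)) *: E i in
  let Psi_inv : 'End(V) := (Psi^-1)%VF in
  [/\ invertible Psi,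
      LR_pair d A (Psi_inv \o B \o Psi)%VF,
      LR_pair d (Psi \o A \o Psi_inv)%VF B
    & [/\ LR_iso A (Psi_inv \o B \o Psi)%VF B A,
      LR_iso B A (Psi \o A \o Psi_inv)%VF B
    & LR_iso A (Psi_inv \o B \o Psi)%VF (Psi \o A \o Psi_inv)%VF B]].
Proof.
rewrite /= -/(Psi d phi E).
have Psi_inj := Psi_lker0 hdec hlow hrai hphi hE.
have pair_conj_raise := LR_pair_conj_raise hdec hlow hrai hphi hE.
have pair_conj_lower := LR_pair_conj_lower hdec hlow hrai hphi hE.
have iso_sigma := LR_iso_sigma hdec hlow hrai hphi hE.
have iso_Psi := LR_iso_conj A B Psi_inj.
split=> //; first exact: invertible_lker0.
by split=> //; apply: LR_iso_trans (LR_iso_sym iso_sigma) iso_Psi.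
Qed.
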